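(* Let $F>1$ and $s>0$ be constants. Consider the self-adjusting $(1,\lambda)$ EA (defined in the context) with update strength $F$ and success rate $s$, using either standard bit mutation with mutation probability $p\in O(1/n)\cap n^{-O(1)}$ or the heavy-tailed mutation operator with a constant $\beta>1$, on an everywhere hard function $f$ with $d+1=n^{o(\log n)}$ function values. Let $\gamma>1$ be a constant with $p_x^-\le\gamma^{-1}$ for all non-optimal $x$, let $\lambda_1:=4\max\left(\log_\gamma(2d(s+1)),\log_\gamma(n\log n)\right)$, and define the potential \[ g(X_t)=f(x_t)-\frac{s}{s+1}\log_F\left(\max\left(\frac{F^{1/s}}{p_{\min}\lambda_t},1\right)\right). \] Then for $n$ large enough, for every generation $t$ with $f(x_t)<d$ and $\lambda_t\ge\lambda_1$, \[ E[g(X_{t+1})-g(X_t)\mid X_t]\ge\frac{1}{2(s+1)}. \] This also holds when every fitness improvement is counted as an increase of the fitness by exactly $1$.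
   Context: Search space $\{0,1\}^n$; asymptotics with respect to $n\to\infty$. W.l.o.g. $f$ takes values in $\{0,\dots,d\}$ with global optima at value $d$. Self-adjusting $(1,\lambda)$ EA: state $X_t=(x_t,\lambda_t)$ with current search point $x_t$ and real-valued offspring population size $\lambda_t$ (rounded to a nearest integer when needed). Each generation creates $\lambda_t$ offspring independently by mutating $x_t$, picks an offspring $y$ of maximum fitness (ties uniformly at random), sets $x_{t+1}=y$ in any case, and sets $\lambda_{t+1}=\max\{1,\lambda_t/F\}$ if $f(y)>f(x_t)$ and $\lambda_{t+1}=F^{1/s}\lambda_t$ otherwise. Standard bit mutation with probability $p$ flips each bit independently with probability $p$. Heavy-tailed mutation with $\beta>1$ draws $\chi\in\{1,\dots,n/2\}$ with $\Pr[\chi=i]=i^{-\beta}/\sum_{j=1}^{n/2}j^{-\beta}$ and then does standard bit mutation with probability $\chi/n$. For these operators such a constant $\gamma$ exists. $p_x^+$ (resp. $p_x^-$) is the probability that a single offspring of $x$ has strictly larger (resp. smaller) fitness than $x$; $p_{\min}:=\min\{p_x^+ : f(x)<d\}$, $p_{\max}:=\max\{p_x^+ : f(x)<d\}$. $f$ is everywhere hard if $p_{\max}=O(n^{-\varepsilon})$ for some constant $0<\varepsilon<1$. *)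

From HB Require Import structures.
From mathcomp Require Import all_boot all_order all_algebra.
From mathcomp Require Import reals exp.
Set Implicit Arguments. Unset Strict Implicit. Unset Printing Implicit Defensive.
Import Order.TTheory GRing.Theory Num.Theory.
Local Open Scope ring_scope.

Section SelfAdjustingEA.
Variable R : realType.

Definition bits (n : nat) := {ffun 'I_n -> bool}.

Definition hdist n (x y : bits n) : nat := #|[set i | x i != y i]|.

Definition sbm n (p : R) (x y : bits n) : R :=
  p ^+ hdist x y * (1 - p) ^+ (n - hdist x y).

Definition ht_norm n (beta : R) : R := \sum_(1 <= j < n./2.+1) (j%:R `^ (- beta)).
Definition heavy n (beta : R) (x y : bits n) : R :=
  \sum_(1 <= i < n./2.+1) (i%:R `^ (- beta) / ht_norm n beta) * sbm (i%:R / n%:R) x y.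

Inductive mut_op := SBM of (nat -> R) | HeavyTailed of R.

Definition mutate (m : mut_op) n : bits n -> bits n -> R :=
  match m with SBM p => @sbm n (p n) | HeavyTailed beta => @heavy n beta end.

Variable f : forall n, bits n -> nat.

Definition pplus m n (x : bits n) : R := \sum_(y | (f x < f y)%N) mutate m x y.
Definition pminus m n (x : bits n) : R := \sum_(y | (f y < f x)%N) mutate m x y.

Definition pmin m (d : nat -> nat) n : R :=
  \big[Num.min/1]_(x : bits n | (f x < d n)%N) pplus m x.
Definition pmax m (d : nat -> nat) n : R :=
  \big[Num.max/0]_(x : bits n | (f x < d n)%N) pplus m x.

Definition logb (b z : R) : R := ln z / ln b.

Definition penalty (F s pm lam : R) : R :=
  s / (s + 1) * logb F (Num.max (F `^ (1 / s) / (pm * lam)) 1).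
Definition potential (F s pm : R) (fx : nat) (lam : R) : R :=
  fx%:R - penalty F s pm lam.

Definition update (F s : R) (improved : bool) (lam : R) : R :=
  if improved then Num.max 1 (lam / F) else F `^ (1 / s) * lam.

Definition round_nat (lam : R) : nat := `|Num.floor (lam + 1 / 2)|%N.

(** Gain g(X_{t+1}) - g(X_t) when parent x with size lam is replaced by y.
    If [unit] is true, every fitness improvement is counted as an increase by exactly 1. *)
Definition gain (unit : bool) (F s pm : R) n (x y : bits n) (lam : R) : R :=
  let imp := (f x < f y)%N in
  let fd := if unit && imp then 1 else (f y)%:R - (f x)%:R in
  fd - penalty F s pm (update F s imp lam) + penalty F s pm lam.

(** Expected gain E[g(X_{t+1}) - g(X_t) | X_t = (x, lam)] for one generation of the
    self-adjusting (1,lambda) EA: round(lam) i.i.d. offspring, a fittest one chosen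
    uniformly at random among the fittest. *)
Definition drift (unit : bool) (m : mut_op) (d : nat -> nat) (F s : R) n
    (x : bits n) (lam : R) : R :=
  let k := round_nat lam in
  let pm := pmin m d n in
  \sum_(ys : {ffun 'I_k -> bits n})
    (\prod_(i < k) mutate m x (ys i)) *
    (let A := [set i : 'I_k | [forall j, (f (ys j) <= f (ys i))%N]] in
     (#|A|%:R)^-1 * \sum_(i in A) gain unit F s pm x (ys i) lam).

End SelfAdjustingEA.

Definition valid_op (R : realType) (m : mut_op R) : Prop :=
  match m with
  | SBM p =>
      (forall n, 0 <= p n <= 1) /\
      (exists C : R, exists N, forall n, (N <= n)%N -> p n <= C / n%:R) /\
      (exists c : R, exists N, forall n, (N <= n)%N -> n%:R `^ (- c) <= p n)
  | HeavyTailed beta => 1 < beta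
  end.

From HB Require Import structures.
From mathcomp Require Import all_boot all_order all_algebra.
From mathcomp Require Import reals sequences exp.
From mathcomp Require Import ring lra zify.
Set Implicit Arguments. Unset Strict Implicit. Unset Printing Implicit Defensive.
Import Order.TTheory GRing.Theory Num.Theory.
Local Open Scope ring_scope.

(* Classify a generation of k = round lambda >= 9/10 lambda offspring by its best
   offspring. If one improves, f gains at least 1 while lambda shrinks by F, which costs
   at most s/(s+1) of penalty: a net gain of at least 1/(s+1). If the best one ties,
   lambda grows by F^(1/s), which never raises the penalty and lowers it by exactly
   1/(s+1) while p_min lambda <= 1. If all are worse, at most d is lost, but only with
   probability (p_x^-)^k <= gamma^-k, which lambda >= lambda1 makes smaller than
   1/(2000 d (s+1)). So the drift is nearly 1/(s+1) when p_min lambda <= 1; when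
   p_min lambda > 1 the gain 1/(s+1) is missed only with probability
   (1 - p_min)^k <= e^(-9/10) < 1/2. *)

Section MutationDistribution.
Variable R : realType.

Lemma sbm_prod n (p : R) (x y : bits n) :
  sbm p x y = \prod_(i < n) (if x i != y i then p else 1 - p).
Proof.
rewrite (bigID (fun i => x i != y i)) /=.
rewrite (eq_bigr (fun _ => p)); last by move=> i ->.
rewrite [X in _ * X](eq_bigr (fun _ => 1 - p)); last by move=> i /negbTE ->.
rewrite !prodr_const /sbm /hdist cardsE; congr (_ * _ ^+ _).
rewrite -[X in (X - _)%N](card_ord n) -(cardC [pred i | x i != y i]) addKn.
by apply: eq_card => i; rewrite !inE.
Qed.

Lemma sbm_sum n (p : R) (x : bits n) : \sum_(y : bits n) sbm p x y = 1.
Proof.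
under eq_bigr do rewrite sbm_prod.
rewrite -(bigA_distr_bigA (fun i (b : bool) => if x i != b then p else 1 - p)).
by apply: big1 => i _; rewrite big_bool /=; case: (x i) => /=; ring.
Qed.

Lemma sbm_ge0 n (p : R) (x y : bits n) : 0 <= p <= 1 -> 0 <= sbm p x y.
Proof. by move=> /andP[p_ge0 p_le1]; rewrite mulr_ge0 ?exprn_ge0 ?subr_ge0. Qed.

Lemma sbm_gt0 n (p : R) (x y : bits n) : 0 < p < 1 -> 0 < sbm p x y.
Proof. by move=> /andP[p_gt0 p_lt1]; rewrite mulr_gt0 ?exprn_gt0 ?subr_gt0. Qed.

Lemma ht_norm_gt0 n (beta : R) : (2 <= n)%N -> 0 < ht_norm n beta.
Proof.
move=> n_ge2; rewrite /ht_norm big_ltn; last by rewrite ltnS half_gt0.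
rewrite powR1 ltr_pwDl // sumr_ge0 // => j _; exact: powR_ge0.
Qed.

Lemma heavy_sum n (beta : R) (x : bits n) : (2 <= n)%N ->
  \sum_(y : bits n) heavy beta x y = 1.
Proof.
move=> n_ge2; rewrite /heavy exchange_big /=.
under eq_bigr do rewrite -mulr_sumr sbm_sum mulr1.
by rewrite -mulr_suml divff // gt_eqF // ht_norm_gt0.
Qed.

Lemma heavy_gt0 n (beta : R) (x y : bits n) : (2 <= n)%N -> 0 < heavy beta x y.
Proof.
move=> n_ge2; have norm_gt0 := ht_norm_gt0 beta n_ge2.
have n_gt0 : (0 : R) < n%:R by rewrite ltr0n; lia.
rewrite /heavy big_ltn; last by rewrite ltnS half_gt0.
apply: ltr_pwDl.
  rewrite mulr_gt0 ?divr_gt0 ?powR_gt0 // sbm_gt0 // divr_gt0 //=.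
  by rewrite ltr_pdivrMr // mul1r ltr1n; lia.
rewrite big_nat_cond sumr_ge0 // => i /andP[/andP[_ i_le] _].
rewrite mulr_ge0 ?divr_ge0 ?powR_ge0 ?(ltW norm_gt0) // sbm_ge0 //.
rewrite divr_ge0 //= ler_pdivrMr // mul1r ler_nat.
by rewrite ltnS -divn2 in i_le; apply: leq_trans i_le (leq_div _ _).
Qed.

Lemma valid_op_mutate_distribution (m : mut_op R) : valid_op m ->
  exists N, forall n, (N <= n)%N -> forall x : bits n,
    (forall y, 0 < mutate m x y) /\ \sum_(y : bits n) mutate m x y = 1.
Proof.
case: m => [p|beta] /=; last first.
  by move=> _; exists 2%N => n n_ge2 x; split=> [y|]; [exact: heavy_gt0 | exact: heavy_sum].
move=> [_ [[C [N1 p_le]] [c [N2 p_ge]]]].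
have C_lt_B := archi_boundP (normr_ge0 C); set B := Num.Def.archi_bound _ in C_lt_B.
exists (maxn (maxn N1 N2) B.+1) => n n_ge x.
have n_gt0 : (0 : R) < n%:R by rewrite ltr0n; lia.
have C_lt_n : C < n%:R.
  apply: le_lt_trans (ler_norm C) (lt_le_trans C_lt_B _).
  by rewrite ler_nat; lia.
have p_lt1 : p n < 1.
  by apply: le_lt_trans (p_le n _) _; [lia | rewrite ltr_pdivrMr // mul1r].
have p_gt0 : 0 < p n by apply: lt_le_trans (p_ge n _); [exact: powR_gt0 | lia].
by split=> [y|]; [rewrite sbm_gt0 ?p_gt0 | exact: sbm_sum].
Qed.

End MutationDistribution.

Section Logarithm.
Variables (R : realType) (b : R).
Hypothesis b_gt1 : 1 < b.

Lemma logbM (x y : R) : 0 < x -> 0 < y -> logb b (x * y) = logb b x + logb b y.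
Proof. by move=> x_gt0 y_gt0; rewrite /logb lnM ?posrE // mulrDl. Qed.

Lemma logbV (x : R) : 0 < x -> logb b x^-1 = - logb b x.
Proof. by move=> x_gt0; rewrite /logb lnV ?posrE // mulNr. Qed.

Lemma logb_powR (x : R) : logb b (b `^ x) = x.
Proof. by rewrite /logb ln_powR mulfK // gt_eqF // ln_gt0. Qed.

Lemma ler_logb (x y : R) : 0 < x -> 0 < y -> (logb b x <= logb b y) = (x <= y).
Proof. by move=> x_gt0 y_gt0; rewrite ler_pM2r ?invr_gt0 ?ln_gt0 // ler_ln. Qed.

Lemma logb1 : logb b 1 = 0.
Proof. by rewrite /logb ln1 mul0r. Qed.

Lemma logb_max1 (x : R) : 0 < x -> logb b (Num.max x 1) = Num.max (logb b x) 0.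
Proof.
move=> x_gt0; have [x_le1|x_gt1] := leP x 1.
  by rewrite logb1 max_r // -logb1 ler_logb.
by rewrite max_l // -logb1 ler_logb // ltW.
Qed.

Lemma logb_expn k : logb b (b ^+ k) = k%:R.
Proof.
by rewrite /logb lnXn ?(lt_trans ltr01) // mulrnAl divff // gt_eqF ?ln_gt0.
Qed.

Lemma expn_ge_of_logb (z : R) k : 0 < z -> logb b z <= k%:R -> z <= b ^+ k.
Proof.
by move=> z_gt0; rewrite -logb_expn ler_logb // exprn_gt0 // (lt_trans ltr01).
Qed.

End Logarithm.

Section Penalty.
Variables (R : realType) (F s pm : R).
Hypotheses (F_gt1 : 1 < F) (s_gt0 : 0 < s) (pm_gt0 : 0 < pm).

Local Notation penalty := (penalty F s pm).

Lemma penaltyE (l : R) : 0 < l ->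
  penalty l = s / (s + 1) * Num.max (1 / s - logb F (pm * l)) 0.
Proof.
move=> l_gt0; have F_gt0 : 0 < F := lt_trans ltr01 F_gt1.
rewrite /penalty logb_max1 ?divr_gt0 ?powR_gt0 ?mulr_gt0 //.
by rewrite logbM ?invr_gt0 ?powR_gt0 ?mulr_gt0 // logbV ?mulr_gt0 // logb_powR.
Qed.

Lemma penalty_update_success (l : R) : 0 < l ->
  penalty (Num.max 1 (l / F)) <= penalty l + s / (s + 1).
Proof.
move=> l_gt0; have F_gt0 : 0 < F := lt_trans ltr01 F_gt1.
have lF_gt0 : 0 < l / F by rewrite divr_gt0.
have l'_ge : l / F <= Num.max 1 (l / F) by rewrite le_max lexx orbT.
have l'_gt0 := lt_le_trans lF_gt0 l'_ge.
have logb_ge : logb F (pm * l) - 1 <= logb F (pm * Num.max 1 (l / F)).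
  rewrite -[X in _ - X](logb_powR F_gt1 1) powRr1 ?(ltW F_gt0) //.
  rewrite -logbV ?powR_gt0 // -logbM ?invr_gt0 ?mulr_gt0 // -mulrA.
  by rewrite ler_logb ?mulr_gt0 ?invr_gt0 // ler_pM2l.
rewrite (penaltyE l_gt0) (penaltyE l'_gt0).
set u := 1 / s - logb F (pm * l); set u' := 1 / s - _.
have w_ge0 : 0 <= s / (s + 1) by rewrite divr_ge0 ?addr_ge0 ?ltW.
have u_le : u <= Num.max u 0 by rewrite le_max lexx.
have max_ge0 : 0 <= Num.max u 0 by rewrite le_max lexx orbT.
rewrite -{3}[s / (s + 1)]mulr1 -mulrDr ler_wpM2l // ge_max; apply/andP; split.
  by move: logb_ge u_le; rewrite /u /u'; lra.
by move: max_ge0; lra.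
Qed.

Lemma penalty_update_failure (l : R) : 0 < l ->
  (if 1 < pm * l then 0 else 1 / (s + 1)) <= penalty l - penalty (F `^ (1 / s) * l).
Proof.
move=> l_gt0; have G_gt0 : 0 < F `^ (1 / s) by rewrite powR_gt0 // (lt_trans ltr01).
have logb_grow : logb F (pm * (F `^ (1 / s) * l)) = logb F (pm * l) + 1 / s.
  by rewrite mulrCA [LHS]logbM ?mulr_gt0 // logb_powR // addrC.
rewrite (penaltyE l_gt0) penaltyE ?mulr_gt0 // logb_grow -mulrBr.
set u := 1 / s - logb F (pm * l).
have -> : 1 / s - (logb F (pm * l) + 1 / s) = u - 1 / s by rewrite /u; ring.
have w_ge0 : 0 <= s / (s + 1) by rewrite divr_ge0 ?addr_ge0 ?ltW.
have s_inv_ge0 : 0 <= 1 / s by rewrite divr_ge0 ?ltW.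
have u_le : u <= Num.max u 0 by rewrite le_max lexx.
have max_ge0 : 0 <= Num.max u 0 by rewrite le_max lexx orbT.
case: ltP => [_|pml_le1].
  rewrite mulr_ge0 // subr_ge0 ge_max max_ge0 andbT.
  by move: u_le s_inv_ge0; lra.
have u_ge : 1 / s <= u.
  by rewrite /u lerDl oppr_ge0 /logb ler_pdivrMr ?ln_gt0 // mul0r ln_le0.
rewrite (max_l (le_trans s_inv_ge0 u_ge)) max_l ?subr_ge0 //.
suff -> : s / (s + 1) * (u - (u - 1 / s)) = 1 / (s + 1) by [].
by field; rewrite !gt_eqF ?addr_gt0.
Qed.

End Penalty.

Section FittestOffspring.
Variables (R : realFieldType) (T : finType).

Lemma mean_ge (I : finType) (A : {set I}) (g : I -> R) (h : R) :
  A != set0 -> (forall i, i \in A -> h <= g i) ->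
  h <= (#|A|%:R)^-1 * \sum_(i in A) g i.
Proof.
move=> A_neq0 h_le; have cardA_gt0 : (0 : R) < #|A|%:R by rewrite ltr0n card_gt0.
by rewrite ler_pdivlMl // mulr_natl -sumr_const; apply: ler_sum.
Qed.

Lemma sum_tuple_prod k (w : T -> R) :
  \sum_(ys : {ffun 'I_k -> T}) \prod_(i < k) w (ys i) = (\sum_y w y) ^+ k.
Proof.
by rewrite -(bigA_distr_bigA (fun (i : 'I_k) y => w y)) /= prodr_const card_ord.
Qed.

Lemma sum_tuple_prod_all k (w : T -> R) (P : pred T) :
  \sum_(ys : {ffun 'I_k -> T}) (\prod_(i < k) w (ys i)) * [forall j, P (ys j)]%:R
  = (\sum_(y | P y) w y) ^+ k.
Proof.
rewrite [in RHS]big_mkcond /= -sum_tuple_prod; apply: eq_bigr => ys _.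
case: (boolP [forall j, P (ys j)]) => [/forallP allP | /forallPn[j /negbTE notPj]].
  by rewrite mulr1; apply: eq_bigr => i _; rewrite allP.
by rewrite mulr0 (bigD1 j) //= notPj mul0r.
Qed.

Definition fittest k (fv : T -> nat) (ys : {ffun 'I_k -> T}) : {set 'I_k} :=
  [set i | [forall j, (fv (ys j) <= fv (ys i))%N]].

Lemma fittest_neq0 k (fv : T -> nat) (ys : {ffun 'I_k -> T}) :
  (0 < k)%N -> fittest fv ys != set0.
Proof.
move=> k_gt0; have [i _ i_max] := arg_maxnP (fun i => fv (ys i)) (isT : xpredT (Ordinal k_gt0)).
by apply/set0Pn; exists i; rewrite inE; apply/forallP => j; exact: i_max.
Qed.

Section SelectionBound.
Variables (fv : T -> nat) (fx : nat) (g : T -> R) (a b c : R).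
Hypothesis g_better : forall y, (fx < fv y)%N -> a <= g y.
Hypothesis g_equal : forall y, fv y = fx -> a - b <= g y.
Hypothesis g_worse : forall y, (fv y < fx)%N -> a - b - c <= g y.

Lemma fittest_ge k (ys : {ffun 'I_k -> T}) i : i \in fittest fv ys ->
  a - b * [forall j, (fv (ys j) <= fx)%N]%:R - c * [forall j, (fv (ys j) < fx)%N]%:R
  <= g (ys i).
Proof.
rewrite inE => /forallP i_max.
have -> : [forall j, (fv (ys j) <= fx)%N] = (fv (ys i) <= fx)%N.
  by apply/forallP/idP => [/(_ i) //|le_fx j]; exact: leq_trans (i_max j) le_fx.
have -> : [forall j, (fv (ys j) < fx)%N] = (fv (ys i) < fx)%N.
  by apply/forallP/idP => [/(_ i) //|lt_fx j]; exact: leq_ltn_trans (i_max j) lt_fx.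
case: ltngtP => [lt_fx|gt_fx|eq_fx].
- by rewrite !mulr1; exact: g_worse.
- by rewrite !mulr0 !subr0; exact: g_better.
- by rewrite mulr1 mulr0 subr0; exact: g_equal.
Qed.

Lemma expected_fittest_mean_ge k (w : T -> R) :
  (0 < k)%N -> (forall y, 0 <= w y) -> \sum_y w y = 1 ->
  a - b * (\sum_(y | (fv y <= fx)%N) w y) ^+ k - c * (\sum_(y | (fv y < fx)%N) w y) ^+ k
  <= \sum_(ys : {ffun 'I_k -> T}) (\prod_(i < k) w (ys i)) *
       ((#|fittest fv ys|%:R)^-1 * \sum_(i in fittest fv ys) g (ys i)).
Proof.
move=> k_gt0 w_ge0 w_sum1.
have mass1 : \sum_(ys : {ffun 'I_k -> T}) \prod_(i < k) w (ys i) = 1.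
  by rewrite sum_tuple_prod w_sum1 expr1n.
have -> : a = a * \sum_(ys : {ffun 'I_k -> T}) \prod_(i < k) w (ys i) by rewrite mass1 mulr1.
rewrite -!sum_tuple_prod_all !mulr_sumr -!sumrB; apply: ler_sum => ys _.
rewrite (mulrC a) (mulrCA b) (mulrCA c) -!mulrBr; apply: ler_wpM2l.
  by apply: prodr_ge0 => i _; exact: w_ge0.
apply: mean_ge; [exact: fittest_neq0 | exact: fittest_ge].
Qed.

End SelectionBound.

End FittestOffspring.

Lemma mul_expn_le_inv (R : realFieldType) (c D q g : R) k :
  0 < c -> 0 <= D -> 0 <= q -> 0 < g -> q <= g^-1 -> c * D <= g ^+ k ->
  D * q ^+ k <= c^-1.
Proof.
move=> c_gt0 D_ge0 q_ge0 g_gt0 q_le cD_le.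
have gk_gt0 : 0 < g ^+ k := exprn_gt0 k g_gt0.
apply: le_trans (_ : D * (g ^+ k)^-1 <= _).
  by rewrite ler_wpM2l // -exprVn lerXn2r // nnegrE invr_ge0 ltW.
by rewrite ler_pdivrMr // ler_pdivlMl //.
Qed.

Section ExpBounds.
Variable R : realType.

Lemma expn_one_sub_le_expR (p : R) k : p <= 1 -> (1 - p) ^+ k <= expR (- (k%:R * p)).
Proof.
move=> p_le1; rewrite -mulrN expRM_natl lerXn2r ?nnegrE ?subr_ge0 //.
  exact: expR_ge0.
by have := expR_ge1Dx (- p); rewrite addrC.
Qed.

Lemma expR_neg_nine_tenths_le : expR (- (9 / 10) : R) <= 400 / 841.
Proof.
have e_ge : (29 / 20) * (29 / 20) <= expR (9 / 20) * expR (9 / 20 : R).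
  by apply: ler_pM; rewrite ?divr_ge0 //; have := expR_ge1Dx (9 / 20 : R); lra.
rewrite -expRD (_ : 9 / 20 + 9 / 20 = 9 / 10) in e_ge; last by field.
by rewrite expRN -div1r ler_pdivrMr ?expR_gt0 //; lra.
Qed.

End ExpBounds.

Section OffspringNumber.
Variable R : realType.

Lemma round_nat_ge (lam : R) : 0 <= lam -> lam - 1 / 2 <= (round_nat lam)%:R.
Proof.
move=> lam_ge0; have floor_ge0 : 0 <= Num.floor (lam + 1 / 2) by rewrite floor_ge0; lra.
rewrite natr_absz ger0_norm //; have := floorD1_gt (lam + 1 / 2); rewrite intrD; lra.
Qed.

Lemma n_ln_n_ge (M : R) : exists N, forall n, (N <= n)%N -> M <= n%:R * ln n%:R.
Proof.
have e_gt0 : 0 < expR (1 : R) := expR_gt0 1.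
have e_lt := archi_boundP (ltW e_gt0); have M_lt := archi_boundP (normr_ge0 M).
set Ne := Num.Def.archi_bound _ in e_lt; set NM := Num.Def.archi_bound _ in M_lt.
exists (maxn Ne NM) => n n_ge.
have e_lt_n : expR 1 < n%:R :> R.
  by apply: lt_le_trans e_lt _; rewrite ler_nat; lia.
have M_lt_n : M < n%:R.
  by apply: le_lt_trans (ler_norm M) (lt_le_trans M_lt _); rewrite ler_nat; lia.
have ln_ge1 : 1 <= ln (n%:R : R).
  by rewrite -[leLHS](expRK 1) ler_ln ?posrE ?(ltW e_lt_n) // (lt_trans e_gt0).
by apply: le_trans (ltW M_lt_n) _; rewrite ler_peMr // ltW // (lt_trans e_gt0).
Qed.

End OffspringNumber.

Section Gain.
Variables (R : realType) (f : forall n, bits n -> nat) (unit : bool) (F s pm : R).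
Hypotheses (F_gt1 : 1 < F) (s_gt0 : 0 < s) (pm_gt0 : 0 < pm).
Variables (n : nat) (x : bits n) (lam : R).
Hypothesis lam_gt0 : 0 < lam.

Lemma gain_better y : (f x < f y)%N -> 1 / (s + 1) <= gain f unit F s pm x y lam.
Proof.
move=> better; rewrite /gain /update better andbT /=.
have fd_ge1 : 1 <= (if unit then 1 else (f y)%:R - (f x)%:R :> R).
  case: unit => //; move: better; rewrite -(ler_nat R) -natr1; lra.
have := penalty_update_success F_gt1 s_gt0 pm_gt0 lam_gt0.
have -> : 1 / (s + 1) = 1 - s / (s + 1) by field; rewrite gt_eqF ?addr_gt0.
move: fd_ge1; set fd := (if unit then _ else _); lra.
Qed.

Lemma gain_equal y : f y = f x ->
  (if 1 < pm * lam then 0 else 1 / (s + 1)) <= gain f unit F s pm x y lam.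
Proof.
move=> equal; rewrite /gain /update equal ltnn andbF /= subrr sub0r [leRHS]addrC.
exact: penalty_update_failure.
Qed.

Lemma gain_worse y : (f y < f x)%N ->
  (if 1 < pm * lam then 0 else 1 / (s + 1)) - (f x)%:R <= gain f unit F s pm x y lam.
Proof.
move=> worse; rewrite /gain /update ltnNge (ltnW worse) andbF /=.
move: (penalty_update_failure F_gt1 s_gt0 pm_gt0 lam_gt0) (ler0n R (f y)).
set e := (if _ then _ else _); lra.
Qed.

End Gain.

Section ImprovementProbability.
Variables (R : realType) (f : forall n, bits n -> nat) (m : mut_op R) (d : nat -> nat).
Variable n : nat.
Hypothesis mutate_gt0 : forall x y : bits n, 0 < mutate m x y.

Lemma pplus_gt0 (x y : bits n) : (f x < f y)%N -> 0 < pplus f m x.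
Proof.
move=> better; rewrite /pplus (bigD1 y) //= ltr_pwDl // sumr_ge0 // => z _.
exact: ltW.
Qed.

Lemma pmin_gt0 : (exists o : bits n, f o = d n) -> 0 < pmin f m d n.
Proof.
move=> [o opt]; apply: (big_ind (fun v => 0 < v)) => //.
  by move=> u v u_gt0 v_gt0; rewrite lt_min u_gt0.
by move=> x nonopt; apply: (@pplus_gt0 _ o); rewrite opt.
Qed.

Lemma pmin_le_pplus (x : bits n) : (f x < d n)%N -> pmin f m d n <= pplus f m x.
Proof. exact: bigmin_le_cond. Qed.

Lemma sum_not_better (x : bits n) : \sum_y mutate m x y = 1 ->
  \sum_(y | (f y <= f x)%N) mutate m x y = 1 - pplus f m x.
Proof.
move=> mass1; rewrite -mass1 [in RHS](bigID (fun y => f x < f y)%N) /= addrC addrK.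
by apply: eq_bigl => y; rewrite -leqNgt.
Qed.

End ImprovementProbability.

Section DriftBound.
Variables (R : realType) (f : forall n, bits n -> nat) (m : mut_op R) (d : nat -> nat).
Variables (F s : R) (unit : bool) (n : nat) (x : bits n) (lam : R).
Hypotheses (F_gt1 : 1 < F) (s_gt0 : 0 < s).
Hypothesis mutate_gt0 : forall x' y : bits n, 0 < mutate m x' y.
Hypothesis mutate_sum1 : \sum_(y : bits n) mutate m x y = 1.
Hypothesis optimum_exists : exists o : bits n, f o = d n.
Hypothesis x_nonopt : (f x < d n)%N.
Hypothesis lam_gt0 : 0 < lam.
Hypothesis round_lam_ge : 9 / 10 * lam <= (round_nat lam)%:R.
Hypothesis pminus_pow_small :
  (d n)%:R * pminus f m x ^+ round_nat lam <= 1 / (2000 * (s + 1)).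

Local Notation k := (round_nat lam).
Local Notation pm := (pmin f m d n).

Lemma no_improvement_le : 1 < pm * lam -> (1 - pplus f m x) ^+ k <= 400 / 841.
Proof.
move=> pml_gt1; have pm_le := pmin_le_pplus m x_nonopt.
have pm_gt0 := pmin_gt0 mutate_gt0 optimum_exists.
have pplus_le1 : pplus f m x <= 1.
  rewrite -subr_ge0 -(sum_not_better f mutate_sum1) sumr_ge0 // => y _; exact: ltW.
have k_pm_ge : 9 / 10 <= k%:R * pm.
  by move: (ler_wpM2r (ltW pm_gt0) round_lam_ge) pml_gt1; lra.
suff le_expR : (1 - pplus f m x) ^+ k <= expR (- (9 / 10)).
  exact: le_trans le_expR (expR_neg_nine_tenths_le R).
have pow_le : (1 - pplus f m x) ^+ k <= (1 - pm) ^+ k.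
  by rewrite lerXn2r ?nnegrE ?subr_ge0 ?lerB // (le_trans pm_le).
apply: le_trans pow_le (le_trans (expn_one_sub_le_expR k (le_trans pm_le pplus_le1)) _).
by rewrite ler_expR lerN2.
Qed.

Lemma drift_ge : 1 / (2 * (s + 1)) <= drift f unit m d F s x lam.
Proof.
have pm_gt0 := pmin_gt0 mutate_gt0 optimum_exists.
have k_gt0 : (0 < k)%N.
  by rewrite -(ltr0n R); apply: lt_le_trans round_lam_ge; move: lam_gt0; lra.
set a := 1 / (s + 1); set b := if 1 < pm * lam then a else 0.
set g := fun y => gain f unit F s pm x y lam.
have a_sub_b : a - b = if 1 < pm * lam then 0 else a.
  by rewrite /b; case: ifP; rewrite ?subrr ?subr0.
have g_better y : (f x < f y)%N -> a <= g y by exact: gain_better.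
have g_equal y : f y = f x -> a - b <= g y by rewrite a_sub_b; exact: gain_equal.
have g_worse y : (f y < f x)%N -> a - b - (d n)%:R <= g y.
  move=> worse; apply: le_trans (gain_worse unit F_gt1 s_gt0 pm_gt0 lam_gt0 worse).
  by rewrite a_sub_b lerB // ler_nat ltnW.
have mutate_ge0 y : 0 <= mutate m x y by exact: ltW.
apply: le_trans _ (expected_fittest_mean_ge g_better g_equal g_worse k_gt0 mutate_ge0 mutate_sum1).
rewrite (sum_not_better f mutate_sum1) -/(pminus f m x).
have a_gt0 : 0 < a by rewrite divr_gt0 ?addr_gt0.
have -> : 1 / (2 * (s + 1)) = a / 2 by rewrite /a; field; rewrite gt_eqF ?addr_gt0.
have worse_le : (d n)%:R * pminus f m x ^+ k <= a / 2000.
  suff -> : a / 2000 = 1 / (2000 * (s + 1)) by [].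
  by rewrite /a; field; rewrite gt_eqF ?addr_gt0.
rewrite /b; case: ifP => [pml_gt1|_]; last by move: worse_le a_gt0; lra.
have := ler_wpM2l (ltW a_gt0) (no_improvement_le pml_gt1).
by move: worse_le a_gt0; lra.
Qed.

End DriftBound.

Section Threshold.
Variables (R : realType) (s gamma : R).
Hypotheses (s_gt0 : 0 < s) (gamma_gt1 : 1 < gamma).

Lemma lambda1_threshold : exists N, forall n, (N <= n)%N ->
  forall D : nat, (0 < D)%N -> forall lam : R,
  4 * Num.max (logb gamma (2 * D%:R * (s + 1))) (logb gamma (n%:R * ln n%:R)) <= lam ->
  [/\ 0 < lam, 9 / 10 * lam <= (round_nat lam)%:R
    & 2000 * (s + 1) * D%:R <= gamma ^+ round_nat lam].
Proof.
have [N nln_ge] := n_ln_n_ge (Num.max 1000 (gamma ^+ 2)).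
exists N => n n_ge D D_gt0 lam lam_ge.
set c := 2 * D%:R * (s + 1); set z := n%:R * ln (n%:R : R).
have [z_ge1000 z_ge_g2] : 1000 <= z /\ gamma ^+ 2 <= z.
  by split; apply: le_trans (nln_ge n n_ge); rewrite le_max lexx ?orbT.
have z_gt0 : 0 < z by apply: lt_le_trans z_ge1000.
have c_ge1 : 1 <= c.
  have D_ge1 : 1 <= D%:R :> R by rewrite ler1n.
  by rewrite -[1](mulr1 1) ler_pM //; move: D_ge1 s_gt0; lra.
have c_gt0 : 0 < c by apply: lt_le_trans c_ge1.
have logc_ge0 : 0 <= logb gamma c.
  by rewrite -(logb1 gamma) ler_logb.
have logz_ge2 : 2 <= logb gamma z.
  by rewrite -(logb_expn gamma_gt1 2) ler_logb ?exprn_gt0 // (lt_trans ltr01).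
move: lam_ge; set M := Num.max _ _ => lam_ge.
have M_ge_c : logb gamma c <= M by rewrite le_max lexx.
have M_ge_z : logb gamma z <= M by rewrite le_max lexx orbT.
have lam_gt0 : 0 < lam by move: lam_ge M_ge_z logz_ge2; lra.
have k_ge := round_nat_ge (ltW lam_gt0).
split=> //; first by move: k_ge lam_ge M_ge_z logz_ge2; lra.
have cz_le : c * z <= gamma ^+ round_nat lam.
  apply: expn_ge_of_logb => //; first exact: mulr_gt0.
  rewrite logbM //.
  by move: k_ge lam_ge M_ge_z M_ge_c logz_ge2 logc_ge0; lra.
apply: le_trans cz_le; rewrite (_ : 2000 * _ * _ = c * 1000); last by rewrite /c; ring.
by rewrite ler_wpM2l // ltW.
Qed.

End Threshold.

Theorem lemma3p6 (R : realType) (F s : R) (m : mut_op R)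
    (f : forall n, bits n -> nat) (d : nat -> nat) (gamma : R) :
  1 < F -> 0 < s -> valid_op m ->
  (* f_n takes values in {0,..,d_n}, with global optima at value d_n *)
  (forall n (x : bits n), (f n x <= d n)%N) ->
  (forall n, exists x : bits n, f n x = d n) ->
  (* d + 1 = n^{o(log n)} *)
  (forall eps : R, 0 < eps -> exists N, forall n, (N <= n)%N ->
      ln (d n).+1%:R <= eps * (ln n%:R) ^+ 2) ->
  (* f is everywhere hard: p_max = O(n^{-eps}) for a constant 0 < eps < 1 *)
  (exists eps : R, 0 < eps < 1 /\ exists C : R, exists N, forall n, (N <= n)%N ->
      pmax f m d n <= C * n%:R `^ (- eps)) ->
  (* gamma > 1 constant with p_x^- <= 1/gamma for all non-optimal x *)
  1 < gamma ->
  (exists N, forall n, (N <= n)%N -> forall x : bits n, (f n x < d n)%N ->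
      pminus f m x <= gamma^-1) ->
  exists N, forall n, (N <= n)%N ->
    let lambda1 := 4 * Num.max (logb gamma (2 * (d n)%:R * (s + 1)))
                               (logb gamma (n%:R * ln n%:R)) in
    forall (x : bits n) (lam : R), (f n x < d n)%N -> lambda1 <= lam ->
    forall unit : bool,
      1 / (2 * (s + 1)) <= drift f unit m d F s x lam.
Proof.
move=> F_gt1 s_gt0 valid_m _ optimum _ _ gamma_gt1 [Nminus pminus_le].
have [Nmut mutate_distr] := valid_op_mutate_distribution valid_m.
have [Nlam lam_large] := lambda1_threshold s_gt0 gamma_gt1.
exists (maxn Nminus (maxn Nmut Nlam)) => n + lambda1 x lam x_nonopt lam_ge unit.
rewrite !geq_max => /and3P[n_ge_minus n_ge_mut n_ge_lam].
have [lam_gt0 round_ge gamma_pow_ge] :=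
  lam_large n n_ge_lam (d n) (leq_ltn_trans (leq0n _) x_nonopt) lam lam_ge.
have mutate_gt0 (x' : bits n) := proj1 (mutate_distr n n_ge_mut x').
have pminus_ge0 : 0 <= pminus f m x by apply: sumr_ge0 => y _; exact: ltW.
have mutate_sum1 := proj2 (mutate_distr n n_ge_mut x).
apply: (drift_ge unit F_gt1 s_gt0 mutate_gt0 mutate_sum1 (optimum n) x_nonopt lam_gt0 round_ge).
rewrite div1r; apply: mul_expn_le_inv gamma_pow_ge.
- by apply: mulr_gt0; rewrite ?ltr0n ?addr_gt0.
- exact: ler0n.
- exact: pminus_ge0.
- exact: lt_trans ltr01 gamma_gt1.
- exact: pminus_le.
Qed.
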